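(* Let $(G,k)$ be an instance, let $V_{\mathrm{ld}}$ be the set of large-dense vertices, let $X$ be a feasible solution, and let $P\subseteq V_{\mathrm{ld}}$ be a vertex triple $(v_1,v_2,v_3)$ inducing $P_3$. Then $X\cap P\neq\emptyset$.
   Context: Graphs are undirected, without self-loops, possibly with multi-edges. $N(v)$ is the set of vertices adjacent to $v$; $\rho(v)$ is the number of unordered pairs $\{u_1,u_2\}\subseteq N(v)$ joined by at least one edge. A vertex $v$ is large-dense if $|N(v)|>7k$ and $\rho(v)> |N(v)|(|N(v)|-1)/4$. A triple of distinct vertices $(v_1,v_2,v_3)$ induces $P_3$ if $v_1v_2$ and $v_2v_3$ are edges (possibly multi-edges) and $v_1v_3$ is not an edge. A vertex set induces a clique if between any two distinct vertices there is exactly one edge, and a tree if it is connected and acyclic (two parallel edges form a cycle). A feasible solution is $X\subseteq V$, $|X|\le k$, with every component of $G-X$ a clique or a tree. *)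

(* A multigraph on a finite vertex type T is given by an
   edge-multiplicity function m : T -> T -> nat (number of parallel edges). *)
From mathcomp Require Import all_boot.

Set Implicit Arguments. Unset Strict Implicit. Unset Printing Implicit Defensive.

Section Multigraph.
Variables (T : finType) (m : T -> T -> nat).

Definition multigraph := (forall u v, m u v = m v u) /\ (forall v, m v v = 0).

Definition adj (u v : T) : bool := 0 < m u v.

Definition nbhd (v : T) : {set T} := [set u | adj v u].

Definition rho (v : T) : nat :=
  #|[set S : {set T} | (S \subset nbhd v) &&
      [exists u1, exists u2, [&& u1 != u2, S == [set u1; u2] & adj u1 u2]]]|.

(* large-dense: |N(v)| > 7k and rho(v) > |N(v)|(|N(v)|-1)/4
   (the latter written without division: 4 rho(v) > |N(v)|(|N(v)|-1)) *)
Definition large_dense (k : nat) (v : T) : bool :=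
  (7 * k < #|nbhd v|) && (#|nbhd v| * (#|nbhd v|).-1 < 4 * rho v).

Definition induces_P3 (v1 v2 v3 : T) : Prop :=
  [/\ [&& v1 != v2, v2 != v3 & v1 != v3],
      adj v1 v2, adj v2 v3 & ~~ adj v1 v3].

Definition is_clique (C : {set T}) : Prop :=
  forall u w, u \in C -> w \in C -> u != w -> m u w = 1.

Definition adj_in (C : {set T}) : rel T :=
  fun u w => [&& u \in C, w \in C & adj u w].

Definition is_connected (C : {set T}) : Prop :=
  forall u w, u \in C -> w \in C -> connect (adj_in C) u w.

Definition simple_cycle_in (C : {set T}) (s : seq T) : Prop :=
  match s with
  | [::] => False
  | x :: s' => [/\ 3 <= size s, uniq s, all (mem C) s &
                  path (adj_in C) x s' /\ adj_in C (last x s') x]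
  end.

(* acyclic: no pair of parallel edges (a 2-cycle) and no cycle of length >= 3 *)
Definition is_acyclic (C : {set T}) : Prop :=
  (forall u w, u \in C -> w \in C -> m u w <= 1) /\
  (forall s, ~ simple_cycle_in C s).

Definition is_tree (C : {set T}) : Prop := is_connected C /\ is_acyclic C.

Definition comp_minus (X : {set T}) (x : T) : {set T} :=
  [set y | connect (adj_in (~: X)) x y].

Definition feasible (k : nat) (X : {set T}) : Prop :=
  #|X| <= k /\
  forall x, x \notin X ->
    is_clique (comp_minus X x) \/ is_tree (comp_minus X x).

End Multigraph.

(* Only the middle vertex v2 matters. If X misses the triple, the component of
   v2 in G - X contains the non-adjacent v1 and v3, so it is not a clique and
   must be a tree. A tree has no triangles, so every edge inside N(v2) has an
   endpoint in X, whence rho(v2) <= |X| |N(v2)| <= k |N(v2)|. Since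
   |N(v2)| - 1 >= 7k >= 4k, this contradicts 4 rho(v2) > |N(v2)| (|N(v2)| - 1). *)
From mathcomp Require Import all_boot.
From mathcomp Require Import zify.

Set Implicit Arguments. Unset Strict Implicit. Unset Printing Implicit Defensive.

Section Multigraph.
Variables (T : finType) (m : T -> T -> nat).
Hypothesis m_sym : forall u v, m u v = m v u.
Hypothesis m_loop : forall v, m v v = 0.

Lemma adj_sym (u w : T) : adj m u w = adj m w u.
Proof. by rewrite /adj m_sym. Qed.

Lemma adj_neq (u w : T) : adj m u w -> u != w.
Proof. by apply: contraTneq => ->; rewrite /adj m_loop. Qed.

Lemma comp_minus_refl (X : {set T}) (x : T) : x \in comp_minus m X x.
Proof. by rewrite inE connect0. Qed.

Lemma comp_minus_adj (X : {set T}) (x u : T) :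
  x \notin X -> u \notin X -> adj m x u -> u \in comp_minus m X x.
Proof. by move=> xX uX xu; rewrite inE connect1 // /adj_in !inE xX uX. Qed.

Lemma clique_adj (C : {set T}) (u w : T) :
  is_clique m C -> u \in C -> w \in C -> u != w -> adj m u w.
Proof. by move=> cl uC wC uw; rewrite /adj cl. Qed.

Lemma acyclic_triangle_free (C : {set T}) (a b c : T) :
  is_acyclic m C -> a \in C -> b \in C -> c \in C ->
  adj m a b -> adj m b c -> ~~ adj m c a.
Proof.
move=> [_ nocycle] aC bC cC ab bc; apply/negP => ca.
apply: (nocycle [:: a; b; c]); split => //=.
- by rewrite !inE negb_or (adj_neq ab) (adj_neq bc) eq_sym (adj_neq ca).
- by rewrite aC bC cC.
- by rewrite /adj_in aC bC cC ab bc ca.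
Qed.

(* Each pair counted by rho v is {x, u} with x in Y and u in N(v). *)
Lemma rho_le_cover (Y : {set T}) (v : T) :
  (forall u w, u \in nbhd m v -> w \in nbhd m v -> adj m u w ->
     (u \in Y) || (w \in Y)) ->
  rho m v <= #|Y| * #|nbhd m v|.
Proof.
move=> cover; rewrite /rho -cardsX.
apply: leq_trans (leq_imset_card (fun p : T * T => [set p.1; p.2]) _).
apply/subset_leq_card/subsetP => S; rewrite inE.
case/andP=> + /existsP [u /existsP [w /and3P [_ /eqP eS uw]]]; rewrite eS => sN.
have uN : u \in nbhd m v by apply: (subsetP sN); exact: set21.
have wN : w \in nbhd m v by apply: (subsetP sN); exact: set22.
case/orP: (cover u w uN wN uw) => [uY | wY].
  by apply/imsetP; exists (u, w); rewrite ?in_setX ?uY.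
by apply/imsetP; exists (w, u); rewrite ?in_setX ?wY //= setUC.
Qed.

Lemma large_dense_rho_gt (k : nat) (v : T) :
  large_dense m k v -> k * #|nbhd m v| < rho m v.
Proof.
rewrite /large_dense; set d := #|nbhd m v|; set r := rho m v.
case/andP=> kd dr.
have kd1 : 4 * k <= d.-1 by lia.
have : d * (4 * k) < 4 * r by apply: leq_ltn_trans dr; rewrite leq_mul2l kd1 orbT.
by rewrite mulnCA ltn_mul2l mulnC.
Qed.

End Multigraph.

Theorem mainTheorem11 (T : finType) (m : T -> T -> nat) (k : nat)
  (X : {set T}) (v1 v2 v3 : T) :
  multigraph m ->
  feasible m k X ->
  large_dense m k v1 -> large_dense m k v2 -> large_dense m k v3 ->
  induces_P3 m v1 v2 v3 ->
  X :&: [set v1; v2; v3] != set0.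
Proof.
move=> [m_sym m_loop] [cardX feas] _ ld2 _ [/and3P [_ _ v13] a12 a23 na13].
apply: contraTneq (large_dense_rho_gt ld2) => XP; rewrite -leqNgt.
have notX v : v \in [set v1; v2; v3] -> v \notin X.
  by move=> vP; apply: contra_eqN XP => vX; apply/set0Pn; exists v; rewrite inE vX.
have nX2 : v2 \notin X by apply: notX; rewrite !inE eqxx orbT.
set C := comp_minus m X v2.
have inC u : u \notin X -> adj m v2 u -> u \in C by exact: comp_minus_adj.
have v1C : v1 \in C by rewrite inC ?notX ?inE ?eqxx // (adj_sym m_sym).
have v3C : v3 \in C by rewrite inC ?notX ?inE ?eqxx ?orbT.
have [cl | [_ acyc]] := feas v2 nX2.
  by rewrite (clique_adj cl v1C v3C v13) in na13.
apply: leq_trans (leq_mul cardX (leqnn _)).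
apply: rho_le_cover => u w; rewrite !inE => v2u v2w uw.
apply/negPn/negP; rewrite negb_or => /andP [uX wX].
move: (acyclic_triangle_free m_loop acyc (comp_minus_refl m X v2)
  (inC u uX v2u) (inC w wX v2w) v2u uw).
by rewrite (adj_sym m_sym) v2w.
Qed.
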